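(* Let $n\ge 2$ and let $p(x)=x^{2n+1}-m_{2n}x^{2n}+m_{2n-1}x^{2n-1}+\cdots+m_1x-1$ with $m_j\in\mathbb Z$, and let $x_0,\dots,x_{2n}\in\mathbb C$ be the roots of $p$. If $x_0\in\mathbb R$ is a simple root and $|x_1|=\cdots=|x_{2n}|$, then $x_0=1$ and $|x_j|=1$ for $j=1,\dots,2n$. *)

From mathcomp Require Import all_boot all_order all_algebra all_field.
Set Implicit Arguments.
Unset Strict Implicit.
Unset Printing Implicit Defensive.

(* Let r be the common modulus of x_1, ..., x_2n.  The product of the roots
   is 1, so |x_0| r^(2n) = 1.  If x_0 is rational, then x_0 and its inverse
   x_1 ... x_2n are rational algebraic integers, so |x_0| = 1.  Otherwise an
   automorphism nu of the algebraic numbers maps x_0 to another root, of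
   modulus r.  Applying nu to (x_1 x_1^* )^(2n) x_0^2 = 1 and taking moduli,
   with |nu x_1| and |nu x_1^*| each equal to |x_0| = r^(-2n) or to r, gives
   r^(2n(k + l) + 2) = 1 with k, l in {-2n, 1}; the exponent is nonzero as
   n >= 2.  Hence r = 1 and x_0 = +-1.  Finally x_0 = -1 is impossible:
   p'(-1) = prod (-1 - x_i) would be an integer equal to minus its conjugate,
   hence 0, against the simplicity of x_0. *)

From HB Require Import structures.
From mathcomp Require Import all_boot all_order all_algebra all_field.
From mathcomp Require Import zify.
Set Implicit Arguments.
Unset Strict Implicit.
Unset Printing Implicit Defensive.

Import Order.TTheory GRing.Theory Num.Theory.
Local Open Scope ring_scope.

Local Notation pQtoC := (map_poly (ratr : rat -> algC)).

Lemma minCpoly_aut_exists (z y : algC) : root (minCpoly z) y ->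
  {nu : {rmorphism algC -> algC} | nu z = y}.
Proof.
move=> qy; have [q [Dq _] dv_q] := minCpolyP z.
have [r Dr] := closed_field_poly_normal (minCpoly z).
rewrite (monicP (minCpoly_monic z)) scale1r in Dr.
have [Qn [QnC [rn Drn genQn]]] := num_field_exists r.
have inQn w : root (minCpoly z) w -> {wn | QnC wn = w}.
  by rewrite Dr root_prod_XsubC -Drn => /mapP/sig2_eqW[wn _ ->]; exists wn.
have [[zn Dz] [yn Dy]] := (inQn z (root_minCpoly z), inQn y qy).
have QnC_rat p : map_poly QnC (map_poly (in_alg Qn) p) = pQtoC p.
  rewrite -map_poly_comp; apply: eq_map_poly => a.
  by rewrite /= rmorphZ_num rmorph1 mulr1.
have min_zn_yn : root (map_poly \1%VF (minPoly 1 zn)) yn.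
  have /polyOver1P[q1 Dq1] := minPolyOver 1 zn.
  have : root (pQtoC q1) z.
    by rewrite -Dz -QnC_rat -Dq1 fmorph_root root_minPoly.
  rewrite lfun1_poly -(fmorph_root QnC) Dq1 QnC_rat Dy dv_q.
  by case/dvdpP=> q2 ->; rewrite rmorphM rootM /= -Dq qy orbT.
(* Extend [zn |-> yn] from Q(zn) to the splitting field Qn, then to algC. *)
have hom1 : kHom 1 1 (\1%VF : 'End(Qn)) by rewrite kHom1.
have homf := kHomExtendP (subvv _) hom1 min_zn_yn.
pose qn := map_poly (in_alg Qn) q.
have split_qn : splittingFieldFor <<1; zn>> qn fullv.
  apply: splittingFieldForS (sub1v _) (subvf _) _; exists rn => //.
  congr (_ %= _): (eqpxx qn); apply/(map_poly_inj QnC).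
  rewrite QnC_rat -Dq Dr -Drn big_map rmorph_prod /=; apply: eq_bigr => w _.
  by rewrite map_polyXsubC.
have [g homg Dg] := kHom_extends (sub1v _) homf (alg_polyOver _ _) split_qn.
have gM : monoid_morphism g by apply/kHom_monoid_morphism.
pose gRM : {rmorphism Qn -> Qn} :=
  HB.pack (fun_of_lfun g) (GRing.isMonoidMorphism.Build _ _ g gM).
have [nu Dnu] := extend_algC_subfield_aut QnC gRM.
exists nu; rewrite -Dz -Dnu /= -Dg ?memv_adjoin //.
by rewrite (kHomExtend_val hom1 min_zn_yn) Dy.
Qed.

Lemma minCpoly_other_root (x : algC) :
  x \notin Crat -> {y | root (minCpoly x) y & y != x}.
Proof.
move=> xQ; have [r Dr] := closed_field_poly_normal (minCpoly x).
rewrite (monicP (minCpoly_monic x)) scale1r in Dr.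
have [/hasP/sig2_eqW[y ry yx] | ] := boolP (has (predC1 x) r).
  by exists y; rewrite // Dr root_prod_XsubC.
rewrite -all_predC => /allP r_x; case/negP: xQ.
have [q [Dq _] _] := minCpolyP x.
have r_neq0 : size r != 0%N.
  by have := size_minCpoly x; rewrite Dr size_prod_XsubC; case: (size r).
(* All roots equal x, so the subleading coefficient of minCpoly x is -d x. *)
have := coefPn_prod_XsubC r_neq0; rewrite -Dr Dq coef_map /=.
rewrite (eq_big_seq (fun _ => x)) => [|w /r_x]; last first.
  by rewrite /= negbK => /eqP.
rewrite big_const_seq count_predT iter_addr_0 => Ex.
have -> : x = - ratr q`_(size r).-1 / (size r)%:R.
  by rewrite Ex opprK -[x *+ _]mulr_natr mulfK // pnatr_eq0.
by rewrite rpredM ?rpredN ?rpredV ?rpred_nat ?Crat_rat.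
Qed.

Lemma Crat_Aint_unit_norm1 (x y : algC) :
  x \in Crat -> x \in Aint -> y \in Aint -> x * y = 1 -> `|x| = 1.
Proof.
move=> xQ xA yA xy1.
have [x_neq0 y_neq0] : x != 0 /\ y != 0.
  by apply/andP; rewrite -negb_or -mulf_eq0 xy1 oner_neq0.
have yQ : y \in Crat by rewrite -(mulKf x_neq0 y) xy1 mulr1 rpredV.
have [xZ yZ] := (Cint_rat_Aint xQ xA, Cint_rat_Aint yQ yA).
apply/eqP; rewrite eq_le norm_intr_ge1 // andbT.
by rewrite -(normr1 algC) -xy1 normrM ler_peMr ?norm_intr_ge1.
Qed.

Lemma conjC_prod_Nsub1 (C : numClosedFieldType) (I : finType) (y : I -> C) :
  (forall i, `|y i| = 1) ->
  (\prod_i (-1 - y i))^* = (\prod_i (-1 - y i)) / \prod_i y i.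
Proof.
move=> y1; rewrite rmorph_prod -prodf_div; apply: eq_bigr => i _.
have yi_neq0 : y i != 0 by rewrite -normr_eq0 y1 oner_neq0.
apply: (mulIf yi_neq0); rewrite divfK // rmorphB rmorphN1 mulrBl -normCKC y1.
by rewrite expr1n mulN1r addrC.
Qed.

Lemma two_moduli_eq1 (F : numFieldType) (n : nat) (a r b c : F) :
  (2 <= n)%N -> 0 < r -> a * r ^+ (2 * n) = 1 ->
  b \in [:: a; r] -> c \in [:: a; r] -> (b * c) ^+ (2 * n) * r ^+ 2 = 1 ->
  r = 1.
Proof.
move=> n_ge2 r_gt0 ar1; have r_neq0 := lt0r_neq0 r_gt0.
have Ea : a = r ^ (- (2 * n)%:Z).
  have rn_neq0 : r ^+ (2 * n) != 0 by rewrite expf_neq0.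
  by apply: (mulIf rn_neq0); rewrite ar1 -exprnN mulVf.
have exprz_mem e : e \in [:: a; r] ->
    exists2 k : int, k \in [:: - (2 * n)%:Z; 1] & e = r ^ k.
  by rewrite !inE => /orP[]/eqP->; [exists (- (2 * n)%:Z) | exists 1];
    rewrite ?inE ?eqxx ?orbT.
move=> /exprz_mem[k k_mem ->] /exprz_mem[l l_mem ->].
rewrite -expfzDr // !exprnP exprz_exp -expfzDr // => /eqP.
rewrite pexprz_eq1 ?ltW // => /orP[/eqP | /eqP //].
by move: k_mem l_mem; rewrite !inE => /orP[]/eqP-> /orP[]/eqP-> ?; exfalso; nia.
Qed.

Lemma root_intr_aut (nu : {rmorphism algC -> algC}) (p : {poly int}) a :
  root (map_poly intr p) (nu a) = root (map_poly intr p) a.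
Proof.
have nu_p : map_poly nu (map_poly intr p) = map_poly intr p.
  by rewrite -map_poly_comp; apply: eq_map_poly => b /=; rewrite rmorph_int.
by rewrite -{1}nu_p fmorph_root.
Qed.

Section EqualModulusRoots.

Variables (n : nat) (p : {poly int}) (x : 'I_(2 * n).+1 -> algC).
Local Notation P := (map_poly (intr : int -> algC) p).
Local Notation x0 := (x ord0).
Local Notation r := `|x (inord 1)|.

Hypotheses (n_ge2 : (2 <= n)%N) (p_monic : p \is monic) (p0 : p`_0 = -1).
Hypothesis P_factor : P = \prod_(i < (2 * n).+1) ('X - (x i)%:P).
Hypothesis x0_real : x0 \is Num.real.
Hypothesis x0_simple : forall i, i != ord0 -> x i != x0.
Hypothesis norm_x_eq : forall i j, i != ord0 -> j != ord0 -> `|x i| = `|x j|.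

Lemma root_P_x i : root P (x i).
Proof.
rewrite P_factor -(big_map x predT (fun z => 'X - z%:P)) root_prod_XsubC.
by rewrite map_f ?mem_index_enum.
Qed.

Lemma root_P_exists a : root P a -> exists i, a = x i.
Proof.
rewrite P_factor -(big_map x predT (fun z => 'X - z%:P)) root_prod_XsubC.
by case/mapP=> i _ ->; exists i.
Qed.

Lemma norm_x i : i != ord0 -> `|x i| = r.
Proof.
move=> i_neq0; apply: norm_x_eq; rewrite // -val_eqE /= inordK //.
by rewrite ltnS muln_gt0 (ltnW n_ge2).
Qed.

Lemma norm_root_neq a : root P a -> a != x0 -> `|a| = r.
Proof.
case/root_P_exists=> i ->; have [-> | /norm_x //] := eqVneq i ord0.
by rewrite eqxx.
Qed.

Lemma norm_root_mem a : root P a -> `|a| \in [:: `|x0|; r].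
Proof.
move=> Pa; have [-> | a_neq] := eqVneq a x0; first by rewrite mem_head.
by rewrite norm_root_neq // !inE eqxx orbT.
Qed.

Lemma Aint_root a : root P a -> a \in Aint.
Proof.
move/root_monic_Aint; apply; first exact: monic_map.
by apply/polyOverP => i; rewrite coef_map intr_int.
Qed.

Lemma prod_roots : x0 * \prod_(i < 2 * n) x (lift ord0 i) = 1.
Proof.
have := congr1 (horner^~ 0) P_factor; rewrite /= horner_coef0 coef_map p0.
rewrite horner_prod (eq_bigr (fun i => - x i)) => [|i _]; last first.
  by rewrite hornerXsubC sub0r.
rewrite prodrN card_ord big_ord_recl exprS exprM sqrrN !expr1n mulr1 mulN1r.
by move/eqP; rewrite raddfN /= eqr_opp => /eqP <-.
Qed.

Lemma norm_x0 : `|x0| * r ^+ (2 * n) = 1.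
Proof.
have := congr1 Num.norm prod_roots; rewrite normrM normr1 normr_prod.
rewrite (eq_bigr (fun _ => r)) => [|i _]; last by rewrite norm_x // neq_lift.
by rewrite prodr_const card_ord.
Qed.

Lemma r_gt0 : 0 < r.
Proof.
rewrite lt_def normr_ge0 andbT; apply: contra_eq_neq norm_x0 => ->.
by rewrite expr0n gtn_eqF ?mulr0 1?eq_sym ?oner_neq0 // muln_gt0 (ltnW n_ge2).
Qed.

Lemma r_eq1_rat : x0 \in Crat -> r = 1.
Proof.
move=> x0Q; have prodA : \prod_(i < 2 * n) x (lift ord0 i) \in Aint.
  by apply: rpred_prod => i _; apply/Aint_root/root_P_x.
have := norm_x0; rewrite (Crat_Aint_unit_norm1 x0Q _ prodA prod_roots).
  rewrite mul1r => /eqP.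
  by rewrite pexpr_eq1 ?muln_gt0 ?(ltnW n_ge2) // => /eqP.
exact/Aint_root/root_P_x.
Qed.

Lemma r_eq1_irrat : x0 \notin Crat -> r = 1.
Proof.
move=> x0Q; have [y qy y_neq] := minCpoly_other_root x0Q.
have [nu nu_x0] := minCpoly_aut_exists qy.
have root_nu a : root P a -> root P (nu a) by rewrite root_intr_aut.
have norm_y : `|y| = r.
  by rewrite norm_root_neq // -nu_x0 root_nu ?root_P_x.
set z := x (inord 1).
have Ez : (z * z^*) ^+ (2 * n) * x0 ^+ 2 = 1.
  rewrite -normCK -(real_normK x0_real) exprAC mulrC -exprMn.
  by rewrite norm_x0 expr1n.
have /(congr1 (Num.norm \o nu)) := Ez; rewrite /= rmorph1 normr1.
rewrite rmorphM !rmorphXn rmorphM nu_x0 normrM !normrX normrM norm_y.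
apply: two_moduli_eq1 n_ge2 r_gt0 norm_x0 _ _; apply: norm_root_mem.
  exact/root_nu/root_P_x.
by apply/root_nu; rewrite (root_intr_aut Num.Def.conjC) root_P_x.
Qed.

Lemma r_eq1 : r = 1.
Proof. by have [/r_eq1_rat | /r_eq1_irrat] := boolP (x0 \in Crat). Qed.

Lemma x0_neqN1 : x0 != -1.
Proof.
apply/eqP => x0N1; pose y i := x (lift ord0 i).
pose G := \prod_(i < 2 * n) ('X - (y i)%:P).
have G_x0 : G.[x0] = P^`().[x0].
  rewrite P_factor big_ord_recl derivM derivXsubC mul1r hornerD hornerM.
  by rewrite hornerXsubC subrr mul0r addr0.
have G_real : G.[x0] \is Num.real.
  rewrite G_x0 x0N1 -(rmorphN1 intr) deriv_map horner_map.
  by rewrite Rreal_int ?intr_int.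
have G_prod : G.[x0] = \prod_i (-1 - y i).
  by rewrite horner_prod; apply: eq_bigr => i _; rewrite hornerXsubC x0N1.
have prod_y : \prod_i y i = -1.
  by apply/eqP; rewrite -eqr_oppLR -mulN1r -x0N1 prod_roots.
have y_norm1 i : `|y i| = 1 by rewrite norm_x ?r_eq1 // eq_sym neq_lift.
have := conjC_prod_Nsub1 y_norm1.
rewrite -G_prod prod_y invrN1 mulrN1 (conj_Creal G_real) => /eqP.
rewrite -addr_eq0 -mulr2n mulrn_eq0 /= G_prod => /prodf_eq0[i _].
rewrite subr_eq0 eq_sym -x0N1 => yi_x0.
have li_neq0 : lift ord0 i != ord0 by rewrite eq_sym neq_lift.
by move: (x0_simple li_neq0); rewrite yi_x0.
Qed.

Lemma x0_eq1 : x0 = 1.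
Proof.
have norm_x0_1 : `|x0| = 1 by have := norm_x0; rewrite r_eq1 expr1n mulr1.
have := real_normK x0_real; rewrite norm_x0_1 expr1n => /esym/eqP.
by rewrite sqrf_eq1 (negbTE x0_neqN1) orbF => /eqP.
Qed.

End EqualModulusRoots.

Theorem lemma3p5 (n : nat) (p : {poly int}) (x : 'I_(2 * n).+1 -> algC) :
  (2 <= n)%N ->
  p \is monic ->
  size p = (2 * n + 2)%N ->
  p`_0 = -1 ->
  map_poly (intr : int -> algC) p = \prod_(i < (2 * n).+1) ('X - (x i)%:P) ->
  x ord0 \is Num.real ->
  (forall i : 'I_(2 * n).+1, i != ord0 -> x i != x ord0) ->
  (forall i j : 'I_(2 * n).+1, i != ord0 -> j != ord0 -> `|x i| = `|x j|) ->
  x ord0 = 1 /\ (forall i : 'I_(2 * n).+1, i != ord0 -> `|x i| = 1).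
Proof.
(* The size of p is already determined by the factorization. *)
move=> n_ge2 p_monic _ p0 P_factor x0_real x0_simple norm_x_eq.
split.
  exact: x0_eq1 n_ge2 p_monic p0 P_factor x0_real x0_simple norm_x_eq.
move=> i /(norm_x n_ge2 norm_x_eq) ->.
exact: r_eq1 n_ge2 p_monic p0 P_factor x0_real norm_x_eq.
Qed.
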